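(* Let $p\neq q$ be primes and $N=N_p\times N_q$ with $N_p\cong C_p\times C_p$ and $N_q\cong C_q\times C_q$. Let $K_p\le T_p\le\mathrm{Aut}(N_p)$ and $K_q\le T_q\le\mathrm{Aut}(N_q)$ with $T_p,T_q$ abelian, and let $f_p\in\mathcal{E}(\mathrm{Aut}(N_p),K_p,N_p)$, $f_q\in\mathcal{E}(\mathrm{Aut}(N_q),K_q,N_q)$. Assume: (1) there is $n=n_pn_q\in N$ ($n_p\in N_p$, $n_q\in N_q$) with $f_p(n_p)=f_q(n_q)\neq0$; (2) $f_p$ vanishes outside $n_p^{T_p}$ and $f_q$ vanishes outside $n_q^{T_q}$; (3) there is an isomorphism $\alpha:T_p/K_p\to T_q/K_q$ such that $f_p(n_p^{a})=f_q(n_q^{b})$ for every $a\in T_p$ and every $b\in T_q$ with $bK_q=\alpha(a^{-1}K_p)$. Regard $T_p\times T_q\le\mathrm{Aut}(N)$, let $r_p:T_p\times T_q\to T_p$, $r_q:T_p\times T_q\to T_q$ be the projections, $\pi_p:T_p\to T_p/K_p$, $\pi_q:T_q\to T_q/K_q$ the quotient maps, $\Gamma=\{\sigma\in T_p\times T_q:\alpha\pi_pr_p(\sigma)=\pi_qr_q(\sigma)\}$ and $G=N\rtimes\Gamma$, acting on $N$ by conjugation. Define $\varepsilon:N\to\mathbb{Z}$ by $\varepsilon(x)=0$ if $x_q\notin n_q^G$ and $\varepsilon(x)=f_p(x_p^g)$ if $n_q=x_q^g$ with $g\in G$. Then $\varepsilon$ is well defined, $f_p\in\mathcal{E}(G,\mathrm{C}_G(n_q),N_p)$,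 $f_q\in\mathcal{E}(G,\mathrm{C}_G(n_p),N_q)$, and also $\varepsilon(x)=0$ if $x_p\notin n_p^G$ and $\varepsilon(x)=f_q(x_q^g)$ if $n_p=x_p^g$ with $g\in G$.
   Context: $x_p,x_q$ denote the $p$-part and $q$-part of $x\in N$; $x^S$ the orbit of $x$ under a group $S$; $\mathrm{C}_G(y)$ the centralizer. Definition of $\mathcal{E}(G,H,A)$ (for a group $G$ acting on a finite abelian group $A$ and $H\le G$): the set of functions $f:A\to\mathbb{Z}$ constant on $H$-orbits such that (I) $\sum_{X\in\mathrm{Cl}_H(A)}f(X)=1$, where $\mathrm{Cl}_H(A)$ is the set of $H$-orbits; (II) $f$ vanishes outside a single local $G$-class of $A$ ($a,b$ locally $G$-conjugate iff $a_r,b_r$ are $G$-conjugate for every prime $r$); (III) $\sum_{c\in C}|\mathrm{C}_H(c)|f(c)\ge0$ for every coset $C$ of a minimal cocyclic subgroup of $A$ (a subgroup $L$ with $A/L$ cyclic, minimal with this property); (IV) $f(a)\ge -h_A[\mathrm{C}_H(a_{\pi_0}):\mathrm{C}_H(a)]$ for all $a$, where $\pi_0$ is the set of primes $r$ dividing $|A|$ with $A_r$ cyclic and $h_A=\frac{\sum_{X\in\pi^-}\prod_{r\in\pi}(r^{k_r-\Delta_X(r)}-1)}{\prod_{r\in\pi}(r-1)r^{k_r-1}}$ with $\pi$ the primes dividing $|A|$, $\pi^-$ the odd-cardinality subsets of $\pi$, $\Delta_X$ the characteristic function of $X$, $k_r$ the rank of the socle of $A_r$; (V) $f(a)<0$ for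 some $a$. Here $\mathrm{C}_H(c)$ is the stabilizer of $c$ in $H$. *)

From HB Require Import structures.
From mathcomp Require Import all_boot all_order all_algebra all_fingroup all_solvable.
Set Implicit Arguments. Unset Strict Implicit. Unset Printing Implicit Defensive.
Import Order.TTheory GRing.Theory Num.Theory.

Local Open Scope group_scope.

Section EDef.
Variables (aT hT : finGroupType).
(* [act a h] : image of a under h (right action notation a^h). *)
Variable act : aT -> hT -> aT.

Definition orb (H : {set hT}) (a : aT) : {set aT} := [set act a h | h in H].
Definition stab (H : {set hT}) (a : aT) : {set hT} := [set h in H | act a h == a].
Definition locconj (G : {set hT}) (a b : aT) : Prop :=
  forall r : nat, prime r -> exists2 g, g \in G & act a.`_r g = b.`_r.

(* k_r : rank of the socle Omega_1(A_r) of the Sylow r-subgroup A_r = O_r(A) *)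
Definition krank (A : {set aT}) (r : nat) : nat := logn r #|'Ohm_1('O_r(A))|.
Definition pi0 (A : {set aT}) : nat_pred :=
  [pred r | (r \in primes #|A|) && cyclic 'O_r(A)].
(* h_A ; subsets of pi indexed by positions in the sequence pi = primes |A| *)
Definition hA (A : {set aT}) : rat :=
  let pi := primes #|A| in
  ((\sum_(X : {set 'I_(size pi)} | odd #|X|)
      \prod_(i < size pi)
         (((nth 0%N pi i)%:R : rat) ^+ (krank A (nth 0%N pi i) - (i \in X)) - 1))
   / \prod_(r <- pi) (((r%:R : rat) - 1) * (r%:R : rat) ^+ (krank A r - 1)))%R.

Definition isE (G H : {set hT}) (A : {group aT}) (f : aT -> int) : Prop :=
  (forall a h, a \in A -> h \in H -> f (act a h) = f a) /\
  [/\
      (\sum_(X in [set orb H a | a in A]) f (repr X) = 1)%R,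
      (exists2 b, b \in A & forall a, a \in A -> ~ locconj G a b -> f a = 0%R),
      (forall L : {group aT},
         [min L of M | (M \subset A) && cyclic (A / M)] ->
         forall C, C \in rcosets L A ->
           (0 <= \sum_(c in C) (#|stab H c|%:Z * f c))%R),
      (forall a, a \in A ->
         (- hA A * (#|stab H a.`_(pi0 A) : stab H a|)%:R <= (f a)%:~R :> rat)%R)
    &
      (exists2 a, a \in A & (f a < 0)%R)].
End EDef.

Section Construction.
Variables (gT : finGroupType) (N Np Nq : {group gT}).
Variables (Kp Tp Kq Tq : {group {perm gT}}).
Variable alpha : coset_of Kp -> coset_of Kq.

Definition sdT := sdprod_by (aut_groupAction N).

(* Gamma = {s in T_p x T_q <= Aut N : alpha (pi_p (r_p s)) = pi_q (r_q s)},
   where T_p x T_q is identified with the automorphisms of N = N_p x N_q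
   whose restrictions r_p s, r_q s to N_p, N_q lie in T_p, T_q. *)
Definition Gamma : {set {perm gT}} :=
  [set s in Aut N | [&& restr_perm Np s \in Tp, restr_perm Nq s \in Tq &
      alpha (coset Kp (restr_perm Np s)) == coset Kq (restr_perm Nq s)]].

Definition Gsd : {set sdT} := (sdpair1 _ @* N) <*> (sdpair2 _ @* Gamma).

Definition cact (x : gT) (g : sdT) : gT :=
  invm (injm_sdpair1 (aut_groupAction N)) ((sdpair1 _ x) ^ g).

Variables (p q : nat) (fp : gT -> int) (nq : gT).
Definition eps (x : gT) : int :=
  if [pick g in Gsd | cact x.`_q g == nq] is Some g then fp (cact x.`_p g) else 0%R.
End Construction.

Arguments Gamma {gT} N Np Nq Kp Tp Kq Tq alpha.
Arguments Gsd {gT} N Np Nq Kp Tp Kq Tq alpha.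
Arguments cact {gT} N x g.
Arguments eps {gT} N Np Nq Kp Tp Kq Tq alpha p q fp nq x.

From HB Require Import structures.
From mathcomp Require Import all_boot all_order all_algebra all_fingroup all_solvable.
From mathcomp Require Import zify.
Set Implicit Arguments.
Unset Strict Implicit.
Unset Printing Implicit Defensive.
Import Order.TTheory GRing.Theory Num.Theory.
Local Open Scope group_scope.

(* An element g of G = N >| Gamma acts on N_p by some a in T_p and on N_q by some b in T_q
   with alpha (a K_p) = b K_q, and every such pair is realised.  Hence H = C_G(n_q) acts on
   N_p through the abelian group T_p, contains (the action of) K_p, and hypothesis (3) makes
   f_p constant on H-orbits.  As f_p is supported on the T_p-orbit of n_p and T_p is abelian,
   all H-orbits (resp. K_p-orbits) meeting the support have one common size m_H (resp. m_K).
   Condition (I) for K_p gives sum f_p = m_K, so the sum of f_p over H-orbits is the integer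
   m_K / m_H with m_K <= m_H: both are forced to be equal.  Equal orbit sizes make the
   stabilisers in H and in K_p proportional, which transfers (I)-(V) from
   E(Aut N_p, K_p, N_p) to E(G, C_G(n_q), N_p); the same invariance shows that epsilon
   is well defined and gives its description through x_p. *)

Section OrbitSums.
Variables (aT T : finGroupType) (to : {action aT &-> T}) (H : {group aT}).
Variables (A : {set T}) (f : T -> int).
Hypotheses (actsHA : [acts H, on A | to])
           (f_inv : {in A & H, forall x h, f (to x h) = f x}).

Lemma sum_orbits_repr :
  (\sum_(X in [set orbit to H a | a in A]) (f (repr X))%:~R : rat)%R =
  (\sum_(a in A) (f a)%:~R / #|orbit to H a|%:R)%R.
Proof.
rewrite (partition_big_imset (orbit to H)) /=.
apply: eq_bigr => _ /imsetP[a0 Aa0 ->].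
have f_orbit a : a \in orbit to H a0 -> f a = f a0.
  by case/orbitP=> h Hh <-; apply: f_inv.
have sXA : orbit to H a0 \subset A by rewrite acts_sub_orbit.
rewrite (eq_bigl (mem (orbit to H a0))) => [|a]; last first.
  case Aa: (a \in A) => /=; last by apply/esym/negbTE; apply: contraFN Aa => /(subsetP sXA).
  by apply/eqP/idP => [<- | /orbit_eqP //]; apply: orbit_refl.
rewrite [RHS](eq_bigr (fun _ => (f a0)%:~R / #|orbit to H a0|%:R)%R) => [|a Xa]; last first.
  by rewrite f_orbit // (orbit_eqP Xa).
rewrite sumr_const -[RHS]mulr_natr divfK ?pnatr_eq0 -?lt0n ?card_gt0; last first.
  by apply/set0Pn; exists a0; apply: orbit_refl.
by rewrite f_orbit // (mem_repr a0) // orbit_refl.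
Qed.

Lemma sum_orbits_repr_const_card (m : nat) :
  {in A, forall a, f a != 0%R -> #|orbit to H a| = m} ->
  (\sum_(X in [set orbit to H a | a in A]) (f (repr X))%:~R : rat)%R =
  ((\sum_(a in A) (f a)%:~R) / m%:R)%R.
Proof.
move=> card_m; rewrite sum_orbits_repr mulr_suml; apply: eq_bigr => a Aa.
by have [->|/(card_m a Aa)->] := eqVneq (f a) 0%R; rewrite ?mul0r.
Qed.

End OrbitSums.

Lemma card_orbit_perm_commute (aT T : finGroupType) (to : {action aT &-> T})
    (H : {set aT}) (t : {perm T}) y :
  {in H, forall h, to (t y) h = t (to y h)} ->
  #|orbit to H (t y)| = #|orbit to H y|.
Proof.
move=> tJ; rewrite -[RHS](card_imset _ (@perm_inj _ t)) -imset_comp.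
by apply: eq_card => z; apply/imsetP/imsetP => -[h Hh ->]; exists h; rewrite //= tJ.
Qed.

Lemma stabE (aT T : finGroupType) (to : {action aT &-> T}) (H : {set aT}) x :
  stab to H x = 'C_H[x | to].
Proof.
by apply/setP => h; rewrite inE [RHS]inE; case: (h \in H) => //=; apply/eqP/astab1P.
Qed.

Lemma constt_pelt (gT : finGroupType) (p : nat) (pi : nat_pred) (x : gT) :
  p.-elt x -> x.`_pi = x \/ x.`_pi = 1.
Proof.
move=> px; have [pi_p | pi'p] := boolP (p \in pi).
  by left; apply: constt_p_elt; apply: sub_p_elt px => r /eqnP->.
by right; apply/constt1P; apply: sub_p_elt px => r /eqnP->.
Qed.

Local Open Scope ring_scope.
Lemma intr_eq_ratio1 (z : int) (k m : nat) : (0 < k <= m)%N ->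
  (z%:~R : rat) = k%:R / m%:R -> z = 1 /\ k = m.
Proof.
case/andP=> k_gt0 le_km def_z.
have m_neq0 : (m%:R : rat) != 0 by rewrite pnatr_eq0 -lt0n (leq_trans k_gt0).
have /intr_inj : ((z * m%:Z)%:~R : rat) = (k%:Z)%:~R.
  by rewrite intrM def_z divfK // -!pmulrn.
move=> e; have : (z <= 0) \/ z = 1 \/ (2 <= z) by lia.
by case=> [|[|]]; nia.
Qed.
Local Close Scope ring_scope.

Lemma min_cocyclic_coset_sub (gT : finGroupType) (L A : {group gT}) C :
  [min L of M | (M \subset A) && cyclic (A / M)] -> C \in rcosets L A -> C \subset A.
Proof.
move/mingroupp/andP=> [sLA _] /rcosetsP[x Ax ->].
by rewrite mul_subG ?sub1set.
Qed.

Lemma eq_isE_act (aT hT : finGroupType) (act1 act2 : aT -> hT -> aT)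
    (G H : {set hT}) (A : {group aT}) (f : aT -> int) :
  {in A, forall a h, act1 a h = act2 a h} ->
  isE act1 G H A f -> isE act2 G H A f.
Proof.
move=> e [f_inv [I II III IV V]].
have orb_eq a : a \in A -> orb act1 H a = orb act2 H a.
  by move=> Aa; apply: eq_in_imset => h _; apply: e.
have stab_eq a : a \in A -> stab act1 H a = stab act2 H a.
  by move=> Aa; apply/setP => h; rewrite !inE e.
have Aconstt a (pi : nat_pred) : a \in A -> a.`_pi \in A by move=> Aa; apply: groupX.
split=> [a h Aa Hh|]; first by rewrite -e ?f_inv.
split=> //.
- rewrite -I; apply: eq_bigl => X.
  by apply/imsetP/imsetP => -[a Aa ->]; exists a; rewrite ?orb_eq.
- have [b Ab f0] := II; exists b => // a Aa nconj; apply: f0 => // conj; apply: nconj.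
  by move=> r pr; have [g Gg eg] := conj r pr; exists g; rewrite -?e ?Aconstt.
- move=> L minL C CL; rewrite (eq_bigr (fun c => (#|stab act1 H c|%:Z * f c)%R)).
    exact: III minL C CL.
  by move=> c Cc; rewrite stab_eq // (subsetP (min_cocyclic_coset_sub minL CL)).
- by move=> a Aa; rewrite -!stab_eq ?Aconstt //; apply: IV.
Qed.

Lemma Aut_fix1 (gT : finGroupType) (A : {group gT}) (a : {perm gT}) :
  a \in Aut A -> a 1 = 1.
Proof. by move=> Aa; rewrite -(autmE Aa) morph1. Qed.

Lemma orbit_supported_perm_inv (gT : finGroupType) (P : {group gT})
    (T : {group {perm gT}}) (f : gT -> int) n a :
  T \subset Aut P -> a \in T -> {in P, forall x, x \notin orb aperm T n -> f x = 0%R} ->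
  (forall t, t \in T -> f ((t * a) n) = f (t n)) -> {in P, forall x, f (a x) = f x}.
Proof.
move=> sTAut Ta f_supp fTa x Px.
have [/imsetP[t Tt ->] | Tn'x] := boolP (x \in orb aperm T n); first by rewrite -permM fTa.
rewrite !f_supp ?(Aut_closed (subsetP sTAut a Ta)) //; apply: contra Tn'x.
case/imsetP=> t Tt tn; apply/imsetP; exists (t * a^-1); first by rewrite groupM ?groupV.
by move: tn; rewrite /aperm permM => <-; rewrite permK.
Qed.

Section TransferE.
Variables (gT hT : finGroupType) (to : {action hT &-> gT}) (G H : {group hT}).
Variables (p : nat) (P : {group gT}) (K T : {group {perm gT}}).
Variables (f : gT -> int) (n : gT).
Hypotheses (pP : p.-group P) (sKT : K \subset T) (sTAut : T \subset Aut P)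
  (cTT : abelian T) (E_K : isE aperm (Aut P) K P f) (Pn : n \in P)
  (f_supp : {in P, forall x, x \notin orb aperm T n -> f x = 0%R}).
Hypotheses (sHG : H \subset G)
  (G_by_T : forall g, g \in G -> exists2 t, t \in T & {in P, forall x, to x g = t x})
  (T_by_G : forall t, t \in T -> exists2 g, g \in G & {in P, forall x, to x g = t x})
  (K_by_H : forall k, k \in K -> exists2 h, h \in H & {in P, forall x, to x h = k x})
  (f_invH : {in P & H, forall x h, f (to x h) = f x}).

Let AutT {t} : t \in T -> t \in Aut P := subsetP sTAut t.

Lemma actT_closed t x : t \in T -> x \in P -> t x \in P.
Proof. by move/AutT/Aut_closed; apply. Qed.

Lemma act_closed g x : g \in G -> x \in P -> to x g \in P.
Proof. by case/G_by_T=> t Tt tg Px; rewrite tg ?actT_closed. Qed.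

Lemma act_constt g x (pi : nat_pred) : g \in G -> x \in P -> to x.`_pi g = (to x g).`_pi.
Proof.
case/G_by_T=> t Tt tg Px; rewrite !tg ?groupX //.
by have := morph_constt (autm (AutT Tt)) pi Px.
Qed.

Lemma act_permT g t x : g \in G -> t \in T -> x \in P -> to (t x) g = t (to x g).
Proof.
case/G_by_T=> s Ts sg Tt Px; rewrite !sg ?actT_closed //.
by rewrite -!permM (centsP cTT s Ts t Tt).
Qed.

Lemma f_neq0_orbit x : x \in P -> f x != 0%R -> exists2 t, t \in T & x = t n.
Proof.
move=> Px fx_neq0; have : x \in orb aperm T n by apply: contraNT fx_neq0 => /f_supp->.
by case/imsetP=> t Tt ->; exists t.
Qed.

Let mK := #|orbit 'P K n|.
Let mH := #|orbit to H n|.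

Lemma card_orbitK t : t \in T -> #|orbit 'P K (t n)| = mK.
Proof.
move=> Tt; apply: card_orbit_perm_commute => k Kk /=.
by rewrite /aperm -!permM (centsP cTT t Tt k (subsetP sKT k Kk)).
Qed.

Lemma card_orbitH t : t \in T -> #|orbit to H (t n)| = mH.
Proof.
by move=> Tt; apply: card_orbit_perm_commute => h /(subsetP sHG) Gh; apply: act_permT.
Qed.

Lemma card_orbitK_gt0 : (0 < mK)%N.
Proof. by rewrite card_gt0; apply/set0Pn; exists n; apply: orbit_refl. Qed.

Lemma card_orbitK_le_H : (mK <= mH)%N.
Proof.
apply/subset_leq_card/subsetP => _ /imsetP[k Kk ->].
by have [h Hh kh] := K_by_H Kk; apply/imsetP; exists h; rewrite ?kh.
Qed.

Lemma sum_f_cardK : (\sum_(a in P) (f a)%:~R = mK%:R :> rat)%R.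
Proof.
have [f_invK [I _ _ _ _]] := E_K.
have actsKP : [acts K, on P | 'P].
  apply/actsP => k /(subsetP sKT) Tk x /=; apply/idP/idP => [|/(actT_closed Tk)//].
  by move/(actT_closed (groupVr Tk)); rewrite -permM mulgV perm1.
have /(congr1 (fun z : int => z%:~R : rat)) := I.
rewrite rmorph_sum /= (sum_orbits_repr_const_card actsKP _ (m := mK)) => [|a k Pa Kk|a Pa].
- by move/(canRL (divfK _)); rewrite mul1r pnatr_eq0 -lt0n card_orbitK_gt0; apply.
- exact: f_invK.
- by case/(f_neq0_orbit Pa) => t Tt ->; apply: card_orbitK.
Qed.

Lemma acts_HP : [acts H, on P | to].
Proof.
apply/actsP => h Hh x; have Gh := subsetP sHG h Hh.
apply/idP/idP => [|/(act_closed Gh)//].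
by move/(act_closed (groupVr Gh)); rewrite actK.
Qed.

Lemma sum_orbitsH_ratio :
  (\sum_(X in [set orbit to H a | a in P]) (f (repr X))%:~R = mK%:R / mH%:R :> rat)%R.
Proof.
rewrite (sum_orbits_repr_const_card acts_HP f_invH (m := mH)) ?sum_f_cardK //.
move=> a Pa /(f_neq0_orbit Pa)[t Tt ->]; exact: card_orbitH.
Qed.

(* The H-orbit sum is the integer m_K / m_H with 0 < m_K <= m_H. *)
Lemma sum_orbitsH_eq1_card :
  (\sum_(X in [set orbit to H a | a in P]) f (repr X) = 1)%R /\ mH = mK.
Proof.
have := sum_orbitsH_ratio; rewrite -rmorph_sum => /intr_eq_ratio1.
by rewrite card_orbitK_gt0 card_orbitK_le_H => /(_ isT)[-> <-].
Qed.

Lemma card_orbitH_K a : a \in P -> f a != 0%R -> #|orbit to H a| = #|orbit 'P K a|.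
Proof.
move=> Pa /(f_neq0_orbit Pa)[t Tt ->].
by rewrite card_orbitH ?card_orbitK //; case: sum_orbitsH_eq1_card.
Qed.

Lemma card_stabH_K c : c \in P -> f c != 0%R ->
  (#|K| * #|stab to H c| = #|H| * #|stab aperm K c|)%N.
Proof.
move=> Pc fc_neq0; rewrite !stabE -(card_orbit_stab to H c) -(card_orbit_stab 'P K c).
by rewrite card_orbitH_K // mulnAC.
Qed.

Lemma astab1_unit (D : {group hT}) : D \subset G -> 'C_D[1 | to] = D.
Proof.
move=> sDG; apply/setIidPl/subsetP => g Dg; apply/astab1P.
by have [t /AutT At ->] := G_by_T (subsetP sDG g Dg); rewrite ?group1 // (Aut_fix1 At).
Qed.

Lemma index_stabH_K a : a \in P -> f a != 0%R ->
  #|stab to H a.`_(pi0 P) : stab to H a| = #|stab aperm K a.`_(pi0 P) : stab aperm K a|.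
Proof.
move=> Pa fa_neq0; rewrite !stabE.
have [->|->] := constt_pelt (pi0 P) (mem_p_elt pP Pa); first by rewrite !indexgg.
have C1K : 'C_K[1 | 'P] = K.
  apply/setIidPl/subsetP => k /(subsetP sKT)/AutT Ak; apply/astab1P.
  exact: Aut_fix1 Ak.
by rewrite astab1_unit // C1K -!card_orbit card_orbitH_K.
Qed.

Lemma locconj_orbit a : a \in P -> f a != 0%R -> locconj to G a n.
Proof.
move=> Pa /(f_neq0_orbit Pa)[t Tt def_a] r _.
have [g Gg tg] := T_by_G (groupVr Tt); exists g => //.
by rewrite act_constt // tg // def_a permK.
Qed.

Lemma coset_sum_ge0 (L : {group gT}) C :
  [min L of M | (M \subset P) && cyclic (P / M)] -> C \in rcosets L P ->
  (0 <= \sum_(c in C) #|stab to H c|%:Z * f c)%R.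
Proof.
move=> minL CL; have [_ [_ _ III _ _]] := E_K.
rewrite -(pmulr_rge0 _ (_ : 0 < #|K|%:Z)%R) ?ltz_nat ?cardG_gt0 // mulr_sumr.
rewrite (eq_bigr (fun c => #|H|%:Z * (#|stab aperm K c|%:Z * f c)))%R => [|c Cc].
  by rewrite -mulr_sumr mulr_ge0 //; apply: III minL C CL.
have [-> | fc_neq0] := eqVneq (f c) 0%R; first by rewrite !mulr0.
have Pc := subsetP (min_cocyclic_coset_sub minL CL) c Cc.
by rewrite !mulrA -!PoszM card_stabH_K.
Qed.

Lemma f_lower_bound a : a \in P ->
  (- hA P * (#|stab to H a.`_(pi0 P) : stab to H a|)%:R <= (f a)%:~R :> rat)%R.
Proof.
move=> Pa; have [_ [_ _ _ IV _]] := E_K; have := IV a Pa.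
have [fa0 | /(index_stabH_K Pa)-> //] := eqVneq (f a) 0%R.
rewrite fa0 !mulNr !oppr_le0 => hA_idx_ge0; rewrite mulr_ge0 //.
by move: hA_idx_ge0; rewrite pmulr_lge0 // ltr0n !stabE indexg_gt0.
Qed.

Theorem isE_transfer : isE to G H P f.
Proof.
have [_ [_ _ _ _ V]] := E_K.
split; first by move=> a h Pa Hh; apply: f_invH.
split=> //; first by case: sum_orbitsH_eq1_card.
- exists n => // a Pa nconj.
  by have [//|/(locconj_orbit Pa)/nconj] := eqVneq (f a) 0%R.
- by move=> L minL C CL; apply: coset_sum_ge0 minL CL.
- exact: f_lower_bound.
Qed.

End TransferE.

Section PiDprod.
Variables (gT : finGroupType) (pi : nat_pred) (A B N : {group gT}).
Hypotheses (defN : A \x B = N) (piA : pi.-group A) (pi'B : pi^'.-group B).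

Lemma sub_dprodl : A \subset N.
Proof. by have [_ <- _ _] := dprodP defN; apply: mulG_subl. Qed.

Lemma constt_dprodl x : x \in N -> x.`_pi \in A.
Proof.
have [_ _ cAB _] := dprodP defN; case/(mem_dprod defN)=> a [b [Aa Bb -> _]].
rewrite consttM; last exact/commute_sym/(centsP cAB).
by rewrite (constt_p_elt (mem_p_elt piA Aa)) (constt1P (mem_p_elt pi'B Bb)) mulg1.
Qed.

Lemma mem_dprodl_pelt x : x \in N -> pi.-elt x -> x \in A.
Proof. by move=> Nx /constt_p_elt <-; apply: constt_dprodl. Qed.

Lemma Aut_dprodl_closed s x : s \in Aut N -> x \in A -> s x \in A.
Proof.
move=> AutNs Ax; have Nx := subsetP sub_dprodl x Ax.
apply: mem_dprodl_pelt; first exact: Aut_closed.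
by have := morph_p_elt (autm AutNs) Nx (mem_p_elt piA Ax).
Qed.

Lemma Aut_dprodl_astabs s : s \in Aut N -> s \in 'N(A | 'P).
Proof.
move=> AutNs; apply/astabsP => x /=; apply/idP/idP => [|]; last exact: Aut_dprodl_closed.
by move/(Aut_dprodl_closed (groupVr AutNs)); rewrite -permM mulgV perm1.
Qed.

End PiDprod.

Lemma Aut_dprod (gT : finGroupType) (H K G : {group gT}) (a b : {perm gT}) :
  H \x K = G -> a \in Aut H -> b \in Aut K ->
  exists2 s, s \in Aut G & {in H, s =1 a} /\ {in K, s =1 b}.
Proof.
move=> defG AutHa AutKb; have [_ defHK cHK tiHK] := dprodP defG.
have cab : autm AutKb @* K \subset 'C(autm AutHa @* H) by rewrite !im_autm.
have inj_ab : 'injm (dprodm defG cab) by rewrite injm_dprodm !injm_autm !im_autm tiHK eqxx.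
have im_ab : dprodm defG cab @* G = G by rewrite im_dprodm !im_autm.
exists (aut inj_ab im_ab); first exact: Aut_aut.
have [sHG sKG] : H \subset G /\ K \subset G by rewrite -defHK mulG_subl mulG_subr.
split=> x Dx.
  by rewrite autE ?(subsetP sHG) //; apply: dprodmEl.
by rewrite autE ?(subsetP sKG) //; apply: dprodmEr.
Qed.

Lemma eq_restr_perm_Aut (gT : finGroupType) (A : {group gT}) (s c : {perm gT}) :
  s \in 'N(A | 'P) -> c \in Aut A -> {in A, s =1 c} -> restr_perm A s = c.
Proof.
move=> nAs AutAc sc; apply/permP => x.
have [Ax | A'x] := boolP (x \in A); first by rewrite restr_permE ?sc.
by rewrite (out_perm (restr_perm_on _ _) A'x) (out_Aut AutAc A'x).
Qed.

Section SdprodConjugation.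
Variables (gT : finGroupType) (N : {group gT}).
Local Notation s1 := (sdpair1 (aut_groupAction N)).
Local Notation s2 := (sdpair2 (aut_groupAction N)).

Lemma cact_sdpair1 x g : x \in N -> cact N x g \in N /\ s1 (cact N x g) = s1 x ^ g.
Proof.
move=> Nx; have [nsN _ _ _ _] := sdprod_context (sdprod_sdpair (aut_groupAction N)).
have : s1 x ^ g \in s1 @* N by rewrite memJ_norm ?mem_morphim ?(subsetP (normal_norm nsN)) ?inE.
by case/morphimP => y _ Ny e; rewrite /cact e invmE.
Qed.

Lemma cact_inj x y g : x \in N -> y \in N -> cact N x g = cact N y g -> x = y.
Proof.
move=> Nx Ny e; have [_ ex] := cact_sdpair1 g Nx; have [_ ey] := cact_sdpair1 g Ny.
have : s1 x ^ g = s1 y ^ g by rewrite -ex -ey e.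
by move/conjg_inj/(injmP (injm_sdpair1 (aut_groupAction N))); apply.
Qed.

(* The identity outside N, so that conjugation becomes a total action. *)
Definition sdconj (x : gT) (g : sdT N) : gT := if x \in N then cact N x g else x.

Lemma sdconj_is_action : is_action [set: sdT N] sdconj.
Proof.
split=> [g x y | x g h _ _]; rewrite /sdconj.
  case Nx: (x \in N); case Ny: (y \in N) => //; first exact: cact_inj.
  - by move=> e; have [] := cact_sdpair1 g Nx; rewrite e Ny.
  - by move=> e; have [] := cact_sdpair1 g Ny; rewrite -e Nx.
case Nx: (x \in N); last by rewrite Nx.
have [Nxg exg] := cact_sdpair1 g Nx; rewrite Nxg.
have [Nxgh exgh] := cact_sdpair1 (g * h) Nx; have [Nxg_h exg_h] := cact_sdpair1 h Nxg.
apply: (injmP (injm_sdpair1 (aut_groupAction N)) _ _ Nxgh Nxg_h).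
by rewrite /= exgh exg_h exg conjgM.
Qed.

Canonical sdconj_action := Action sdconj_is_action.

Lemma sdconjE x g : x \in N -> sdconj_action x g = cact N x g.
Proof. by move=> Nx; rewrite /= /sdconj Nx. Qed.

Lemma sdconj_sdpair1 x y : abelian N -> x \in N -> y \in N -> sdconj_action x (s1 y) = x.
Proof.
move=> cNN Nx Ny; have [Nxy exy] := cact_sdpair1 (s1 y) Nx.
rewrite sdconjE //; apply: (injmP (injm_sdpair1 (aut_groupAction N)) _ _ Nxy Nx).
by rewrite /= exy -morphJ // /conjg (centsP cNN x Nx y Ny) mulKg.
Qed.

Lemma sdconj_sdpair2 x s : s \in Aut N -> x \in N -> sdconj_action x (s2 s) = s x.
Proof.
move=> AutNs Nx; have [Nxs exs] := cact_sdpair1 (s2 s) Nx.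
rewrite sdconjE //; apply: (injmP (injm_sdpair1 (aut_groupAction N)) _ _ Nxs (Aut_closed AutNs Nx)).
by rewrite /= exs -sdpair_act //= /autact /= apermE.
Qed.

Lemma astab1_sdconj (G : {set sdT N}) x : x \in N -> 'C_G[x | sdconj_action] = 'C_G[s1 x].
Proof.
move=> Nx; apply/setP => g; rewrite in_setI [in RHS]in_setI; congr (_ && _).
have [Nxg exg] := cact_sdpair1 g Nx; rewrite -astab1J.
apply/astab1P/astab1P => /= e; rewrite /sdconj Nx in e *; first by rewrite -exg e.
by apply: (injmP (injm_sdpair1 (aut_groupAction N)) _ _ Nxg Nx); rewrite /= exg e.
Qed.

End SdprodConjugation.

Section Main.
Variables (gT : finGroupType) (p q : nat) (Np Nq N : {group gT}).
Variables (Kp Tp Kq Tq : {group {perm gT}}).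
Variable alpha : {morphism Tp / Kp >-> coset_of Kq}.
Hypotheses (neq_pq : p != q) (pNp : p.-group Np) (qNq : q.-group Nq)
  (cNpNp : abelian Np) (cNqNq : abelian Nq) (defN : Np \x Nq = N).
Hypotheses (sKTp : Kp \subset Tp) (sTAutp : Tp \subset Aut Np) (cTTp : abelian Tp)
  (sKTq : Kq \subset Tq) (sTAutq : Tq \subset Aut Nq) (cTTq : abelian Tq)
  (isom_alpha : isom (Tp / Kp) (Tq / Kq) alpha).

Local Notation s1 := (sdpair1 (aut_groupAction N)).
Local Notation s2 := (sdpair2 (aut_groupAction N)).
Local Notation Gam := (Gamma N Np Nq Kp Tp Kq Tq alpha).
Local Notation G := (Gsd N Np Nq Kp Tp Kq Tq alpha).
Local Notation to := (sdconj_action N).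

Let defNC : Nq \x Np = N. Proof. by rewrite dprodC. Qed.
Let q'Np : q^'.-group Np.
Proof. by apply: sub_pgroup pNp => r /eqnP->; rewrite !inE. Qed.
Let p'Nq : p^'.-group Nq.
Proof. by apply: sub_pgroup qNq => r /eqnP->; rewrite !inE eq_sym. Qed.
Let sNpN : Np \subset N := sub_dprodl defN.
Let sNqN : Nq \subset N := sub_dprodl defNC.

Lemma abelian_dprod : abelian N.
Proof. by have [_ <- cNpNq _] := dprodP defN; rewrite abelianM cNpNp cNqNq. Qed.

Definition paired (a b : {perm gT}) : Prop :=
  [/\ a \in Tp, b \in Tq & alpha (coset Kp a) = coset Kq b].

Let nKTp : Tp \subset 'N(Kp) := sub_abelian_norm cTTp sKTp.
Let nKTq : Tq \subset 'N(Kq) := sub_abelian_norm cTTq sKTq.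

Lemma pairedM a b a' b' : paired a b -> paired a' b' -> paired (a * a') (b * b').
Proof.
case=> Ta Tb e [Ta' Tb' e']; split; rewrite ?groupM //.
by rewrite !morphM ?(subsetP nKTp) ?(subsetP nKTq) ?mem_quotient // e e'.
Qed.

Lemma pairedV a b : paired a b -> paired a^-1 b^-1.
Proof.
case=> Ta Tb e; split; rewrite ?groupV //.
by rewrite !morphV ?(subsetP nKTp) ?(subsetP nKTq) ?mem_quotient // e.
Qed.

Lemma paired1 : paired 1 1.
Proof. by split; rewrite ?group1 // !morph1. Qed.

Lemma paired_Kp k : k \in Kp -> paired k 1.
Proof. by move=> Kk; split; rewrite ?group1 ?(subsetP sKTp) // (coset_id Kk) !morph1. Qed.

Lemma paired_Kq k : k \in Kq -> paired 1 k.
Proof. by move=> Kk; split; rewrite ?group1 ?(subsetP sKTq) // (coset_id Kk) !morph1. Qed.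

Lemma paired_exr a : a \in Tp -> exists b, paired a b.
Proof.
move=> Ta; have [_ im_alpha] := isomP isom_alpha.
have : alpha (coset Kp a) \in Tq / Kq by rewrite -im_alpha mem_morphim ?mem_quotient.
by case/morphimP => b _ Tb e; exists b.
Qed.

Lemma paired_exl b : b \in Tq -> exists a, paired a b.
Proof.
move=> Tb; have [_ im_alpha] := isomP isom_alpha.
have : coset Kq b \in alpha @* (Tp / Kp) by rewrite im_alpha mem_quotient.
by case/morphimP => _ _ /morphimP[a _ Ta ->] e; exists a.
Qed.

Definition induces (g : sdT N) (a b : {perm gT}) : Prop :=
  {in Np, forall x, to x g = a x} /\ {in Nq, forall y, to y g = b y}.

Lemma inducesM g h a b a' b' : paired a b ->
  induces g a b -> induces h a' b' -> induces (g * h) (a * a') (b * b').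
Proof.
case=> /(subsetP sTAutp) AutTa /(subsetP sTAutq) AutTb _ [ag bg] [ag' bg'].
split=> x Dx; rewrite actM permM.
- by rewrite ag // ag' ?Aut_closed.
- by rewrite bg // bg' ?Aut_closed.
Qed.

Lemma induced_by_generator g : g \in (s1 @* N) :|: (s2 @* Gam) ->
  exists a b, paired a b /\ induces g a b.
Proof.
case/setUP=> [/morphimP[y Ny _ ->] | /morphimP[s _ Gs ->]] {g}.
  exists 1, 1; split; first exact: paired1.
  split=> x Dx; rewrite perm1 sdconj_sdpair1 ?abelian_dprod //.
    exact: subsetP sNpN x Dx.
  exact: subsetP sNqN x Dx.
move: Gs; rewrite inE => /andP[AutNs /and3P[Tps Tqs /eqP e]].
exists (restr_perm Np s), (restr_perm Nq s); split=> //.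
split=> x Dx; rewrite sdconj_sdpair2 // ?restr_permE //.
- by move: (Aut_dprodl_astabs defN pNp p'Nq AutNs).
- exact: subsetP sNpN x Dx.
- by move: (Aut_dprodl_astabs defNC qNq q'Np AutNs).
- exact: subsetP sNqN x Dx.
Qed.

Lemma induced_by_Gsd g : g \in G -> exists a b, paired a b /\ induces g a b.
Proof.
case/gen_prodgP => m [c Gc ->] {g}; elim: m c Gc => [|m IHm] c Gc.
  exists 1, 1; rewrite big_ord0; split; first exact: paired1.
  by split=> x _; rewrite act1 perm1.
rewrite big_ord_recr /=.
have [a [b [pab abg]]] := IHm _ (fun i => Gc (widen_ord (leqnSn m) i)).
have [a' [b' [pab' abg']]] := induced_by_generator (Gc ord_max).
by exists (a * a'), (b * b'); split; [apply: pairedM | apply: inducesM].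
Qed.

Lemma induced_by_paired a b : paired a b -> exists2 g, g \in G & induces g a b.
Proof.
case=> Ta Tb e; have AutNpa := subsetP sTAutp a Ta; have AutNqb := subsetP sTAutq b Tb.
have [s AutNs [sa sb]] := Aut_dprod defN AutNpa AutNqb.
have sNp : restr_perm Np s = a.
  exact: eq_restr_perm_Aut (Aut_dprodl_astabs defN pNp p'Nq AutNs) AutNpa sa.
have sNq : restr_perm Nq s = b.
  exact: eq_restr_perm_Aut (Aut_dprodl_astabs defNC qNq q'Np AutNs) AutNqb sb.
exists (s2 s).
  by apply/mem_gen/setUP; right; apply: mem_morphim; rewrite // inE AutNs sNp sNq Ta Tb e eqxx.
split=> x Dx.
  by rewrite sdconj_sdpair2 ?sa // (subsetP sNpN).
by rewrite sdconj_sdpair2 ?sb // (subsetP sNqN).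
Qed.

Variables (fp fq : gT -> int) (np nq : gT).
Hypotheses (E_p : isE aperm (Aut Np) Kp Np fp) (E_q : isE aperm (Aut Nq) Kq Nq fq)
  (Np_np : np \in Np) (Nq_nq : nq \in Nq)
  (fp_supp : {in Np, forall x, x \notin orb aperm Tp np -> fp x = 0%R})
  (fq_supp : {in Nq, forall y, y \notin orb aperm Tq nq -> fq y = 0%R})
  (fp_fq : forall a b, a \in Tp -> b \in Tq ->
     coset Kq b = alpha (coset Kp a^-1) -> fp (aperm np a) = fq (aperm nq b)).

Lemma fp_paired a b : paired a b -> fp (a np) = fq (b^-1 nq).
Proof.
move=> pab; have [Ta _ _] := pab; have [_ Tb' e] := pairedV pab.
by apply: fp_fq; rewrite ?e.
Qed.

Lemma fp_paired_inv a b : paired a b -> b nq = nq -> {in Np, forall x, fp (a x) = fp x}.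
Proof.
move=> pab bnq; have [Ta _ _] := pab.
apply: orbit_supported_perm_inv sTAutp Ta fp_supp _ => t Tt.
have [w ptw] := paired_exr Tt.
rewrite (fp_paired (pairedM ptw pab)) (fp_paired ptw) invMg permM.
by rewrite -{1}bnq permK.
Qed.

Lemma fq_paired_inv a b : paired a b -> a np = np -> {in Nq, forall y, fq (b y) = fq y}.
Proof.
move=> pab anp; have [_ Tb _] := pab.
apply: orbit_supported_perm_inv sTAutq Tb fq_supp _ => t Tt.
have [w pwt] := paired_exl Tt.
have := fp_paired (pairedV (pairedM pwt pab)); have := fp_paired (pairedV pwt).
rewrite !invgK => <- <-.
by rewrite invMg permM -{1}anp permK.
Qed.

Let G_group : {group sdT N} := joing_group (s1 @* N) (s2 @* Gam).

Lemma act_Np g y : g \in G -> y \in Np -> to y g \in Np.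
Proof.
case/induced_by_Gsd=> a [b [[Ta _ _] [ag _]]] Py.
by rewrite ag // (Aut_closed (subsetP sTAutp a Ta)).
Qed.

Lemma act_Nq g y : g \in G -> y \in Nq -> to y g \in Nq.
Proof.
case/induced_by_Gsd=> a [b [[_ Tb _] [_ bg]]] Qy.
by rewrite bg // (Aut_closed (subsetP sTAutq b Tb)).
Qed.

Lemma Tp_induced t : t \in Tp -> exists2 g, g \in G & {in Np, forall x, to x g = t x}.
Proof. by case/paired_exr=> b /induced_by_paired[g Gg [tg _]]; exists g. Qed.

Lemma Tq_induced t : t \in Tq -> exists2 g, g \in G & {in Nq, forall y, to y g = t y}.
Proof. by case/paired_exl=> a /induced_by_paired[g Gg [_ tg]]; exists g. Qed.

Theorem isE_Np : isE to G 'C_G[nq | to] Np fp.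
Proof.
apply: (isE_transfer (G := G_group) (H := 'C_G_group[nq | to]%G)
  pNp sKTp sTAutp cTTp E_p Np_np fp_supp).
- exact: subsetIl.
- by move=> g /induced_by_Gsd[a [b [[Ta _ _] [ag _]]]]; exists a.
- exact: Tp_induced.
- move=> k /paired_Kp/induced_by_paired[g Gg [kg g1]]; exists g => //.
  by rewrite inE Gg; apply/astab1P; rewrite g1 ?perm1.
- move=> x h Px /setIP[/induced_by_Gsd[a [b [pab [ah bh]]]] /astab1P hnq].
  by rewrite ah // (fp_paired_inv pab) // -bh.
Qed.

Theorem isE_Nq : isE to G 'C_G[np | to] Nq fq.
Proof.
apply: (isE_transfer (G := G_group) (H := 'C_G_group[np | to]%G)
  qNq sKTq sTAutq cTTq E_q Nq_nq fq_supp).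
- exact: subsetIl.
- by move=> g /induced_by_Gsd[a [b [[_ Tb _] [_ bg]]]]; exists b.
- exact: Tq_induced.
- move=> k /paired_Kq/induced_by_paired[g Gg [g1 kg]]; exists g => //.
  by rewrite inE Gg; apply/astab1P; rewrite g1 ?perm1.
- move=> y h Qy /setIP[/induced_by_Gsd[a [b [pab [ah bh]]]] /astab1P hnp].
  by rewrite bh // (fq_paired_inv pab) // -ah.
Qed.

Local Notation eps := (eps N Np Nq Kp Tp Kq Tq alpha p q fp nq).

Let Nx_p := constt_dprodl defN pNp p'Nq.
Let Nx_q := constt_dprodl defNC qNq q'Np.
Let cactE_p x g : x \in N -> cact N x.`_p g = to x.`_p g.
Proof. by move/Nx_p/(subsetP sNpN)/sdconjE. Qed.
Let cactE_q x g : x \in N -> cact N x.`_q g = to x.`_q g.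
Proof. by move/Nx_q/(subsetP sNqN)/sdconjE. Qed.

Lemma eps_conj_q x g : x \in N -> g \in G -> cact N x.`_q g = nq ->
  eps x = fp (cact N x.`_p g).
Proof.
move=> Nx Gg; rewrite /eps !cactE_p ?cactE_q // => xqg.
case: pickP => [g' /andP[Gg' /eqP] | /(_ g)]; last by rewrite Gg cactE_q // xqg eqxx.
rewrite cactE_q // => xqg'; have [f_inv _] := isE_Np.
rewrite -(mulKVg g' g) actM f_inv ?cactE_p ?act_Np ?Nx_p //.
by rewrite inE groupM ?groupV //=; apply/astab1P; rewrite actM -{1}xqg' actK.
Qed.

Lemma eps_nonconj_p x : x \in N -> x.`_p \notin orb (cact N) G np -> eps x = 0%R.
Proof.
move=> Nx nconj; rewrite /eps; case: pickP => [g /andP[Gg _] | //].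
rewrite cactE_p //; apply: fp_supp; first by rewrite act_Np ?Nx_p.
apply: contra nconj => /imsetP[t Tt xpg]; have [g' Gg' tg'] := Tp_induced Tt.
apply/imsetP; exists (g' * g^-1); first by rewrite groupM ?groupV.
by rewrite -sdconjE ?(subsetP sNpN) // actM tg' // -[t np]/(aperm np t) -xpg actK.
Qed.

Lemma eps_conj_p x g : x \in N -> g \in G -> cact N x.`_p g = np ->
  eps x = fq (cact N x.`_q g).
Proof.
move=> Nx Gg; rewrite cactE_p ?cactE_q // => xpg; rewrite /eps.
case: pickP => [g' /andP[Gg' /eqP] | noG].
  rewrite cactE_q ?cactE_p // => xqg'.
  have [a [b [pab [ag bg]]]] := induced_by_Gsd (groupM (groupVr Gg) Gg').
  have -> : to x.`_p g' = a np by rewrite -(mulKVg g g') actM xpg ag.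
  have -> : to x.`_q g = b^-1 nq.
    by rewrite -xqg' -(mulKVg g g') actM bg ?act_Nq ?Nx_q // permK.
  exact: fp_paired.
apply/esym/fq_supp; first by rewrite act_Nq ?Nx_q.
apply/negP => /imsetP[t Tt xqg]; have [g'' Gg'' tg''] := Tq_induced (groupVr Tt).
have := noG (g * g''); rewrite groupM // cactE_q // actM xqg tg'' /aperm ?permK ?eqxx //.
by rewrite (Aut_closed (subsetP sTAutq t Tt)).
Qed.

Theorem Gsd_eps_properties :
  [/\ forall x g, x \in N -> g \in G -> cact N x.`_q g = nq -> eps x = fp (cact N x.`_p g),
      isE (cact N) G 'C_G[s1 nq] Np fp,
      isE (cact N) G 'C_G[s1 np] Nq fq,
      forall x, x \in N -> x.`_p \notin orb (cact N) G np -> eps x = 0%R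
    & forall x g, x \in N -> g \in G -> cact N x.`_p g = np -> eps x = fq (cact N x.`_q g)].
Proof.
split; [exact: eps_conj_q | | | exact: eps_nonconj_p | exact: eps_conj_p].
  rewrite -astab1_sdconj ?(subsetP sNqN) //; apply: eq_isE_act isE_Np.
  by move=> y h Py; rewrite sdconjE ?(subsetP sNpN).
rewrite -astab1_sdconj ?(subsetP sNpN) //; apply: eq_isE_act isE_Nq.
by move=> y h Qy; rewrite sdconjE ?(subsetP sNqN).
Qed.

End Main.

Theorem mainTheorem12 (gT : finGroupType) (p q : nat) (Np Nq N : {group gT})
  (Kp Tp Kq Tq : {group {perm gT}}) (fp fq : gT -> int) (np nq : gT)
  (alpha : {morphism (Tp / Kp)%g >-> coset_of Kq}) :
  prime p -> prime q -> p != q ->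
  p.-abelem Np -> #|Np| = (p ^ 2)%N ->
  q.-abelem Nq -> #|Nq| = (q ^ 2)%N ->
  (Np \x Nq)%g = N ->
  Kp \subset Tp -> Tp \subset Aut Np -> abelian Tp ->
  Kq \subset Tq -> Tq \subset Aut Nq -> abelian Tq ->
  isE aperm (Aut Np) Kp Np fp ->
  isE aperm (Aut Nq) Kq Nq fq ->
  (* (1) *)
  np \in Np -> nq \in Nq -> fp np = fq nq -> fp np != 0%R ->
  (* (2) *)
  (forall x, x \in Np -> x \notin orb aperm Tp np -> fp x = 0%R) ->
  (forall x, x \in Nq -> x \notin orb aperm Tq nq -> fq x = 0%R) ->
  (* (3) *)
  isom (Tp / Kp)%g (Tq / Kq)%g alpha ->
  (forall a b, a \in Tp -> b \in Tq ->
     coset Kq b = alpha (coset Kp a^-1)%g -> fp (aperm np a) = fq (aperm nq b)) ->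
  let G := Gsd N Np Nq Kp Tp Kq Tq alpha in
  let act := cact N in
  let epsilon := eps N Np Nq Kp Tp Kq Tq alpha p q fp nq in
  [/\ (* epsilon is well defined *)
      (forall x g, x \in N -> g \in G -> act x.`_q g = nq ->
         epsilon x = fp (act x.`_p g)),
      isE act G ('C_G[sdpair1 _ nq])%g Np fp,
      isE act G ('C_G[sdpair1 _ np])%g Nq fq,
      (forall x, x \in N -> x.`_p \notin orb act G np -> epsilon x = 0%R)
    & (forall x g, x \in N -> g \in G -> act x.`_p g = np ->
         epsilon x = fq (act x.`_q g))].
Proof.
move=> _ _ neq_pq eNp _ eNq _ defN sKTp sTAutp cTTp sKTq sTAutq cTTq E_p E_q Np_np Nq_nq
  _ _ fp_supp fq_supp isom_alpha fp_fq G act epsilon.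
have [pNp cNpNp] := (abelem_pgroup eNp, abelem_abelian eNp).
have [qNq cNqNq] := (abelem_pgroup eNq, abelem_abelian eNq).
by apply: Gsd_eps_properties.
Qed.
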